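(* Let $n\ge 0$, let $T$ be a triangulation of a regular polygon with $n+3$ vertices and let $\alpha,\alpha'$ be positive roots. Then $\operatorname{Supp}\alpha\cap\operatorname{Supp}\alpha'$ is connected as a subset of the (underlying graph of the) quiver ${Q}_T$.
   Context: Diagonals of the polygon are called roots; those in $T$ are negative roots, indexed by a set $I$ (the one indexed by $i$ written $-\alpha_i$), and the others positive roots. $\operatorname{Supp}\alpha$ is the set of $i\in I$ with $-\alpha_i$ crossing $\alpha$. The quiver ${Q}_T$ has vertex set $I$, with an arrow between $i$ and $j$ exactly when $-\alpha_i$ and $-\alpha_j$ bound a common triangle of $T$. *)

From mathcomp Require Import all_boot.
Set Implicit Arguments. Unset Strict Implicit. Unset Printing Implicit Defensive.

(* Vertices of a regular polygon with N vertices are 'I_N, in cyclic order.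
   A segment between two vertices is encoded as a pair (a, b) with a < b. *)
Section Polygon.
Variable N : nat.
Definition seg := ('I_N * 'I_N)%type.

Definition is_side (s : seg) : bool :=
  (s.1 < s.2) && ((s.2 == s.1.+1 :> nat) || ((s.1 == 0 :> nat) && (s.2 == N.-1 :> nat))).

(* diagonals (= roots): segments between two distinct non-adjacent vertices *)
Definition is_diag (s : seg) : bool := (s.1 < s.2) && ~~ is_side s.

Definition cross (s t : seg) : bool :=
  ((s.1 < t.1 < s.2) && (s.2 < t.2)) || ((t.1 < s.1 < t.2) && (t.2 < s.2)).

Definition triangulation (T : {set seg}) : Prop :=
  [/\ forall s, s \in T -> is_diag s,
      forall s t, s \in T -> t \in T -> ~~ cross s t
    & forall s, is_diag s -> s \notin T -> exists2 t, t \in T & cross s t].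

Definition T_edge (T : {set seg}) (s : seg) : bool := is_side s || (s \in T).

(* arrow (in either direction) of the quiver Q_T between the negative roots
   s and t of T: s != t and they bound a common triangle of T *)
Definition quiver_adj (T : {set seg}) (s t : seg) : bool :=
  (s != t) &&
  [exists x : 'I_N, exists y : 'I_N, exists z : 'I_N,
     [&& x < y, y < z,
         T_edge T (x, y), T_edge T (y, z), T_edge T (x, z),
         s \in [:: (x, y); (y, z); (x, z)] &
         t \in [:: (x, y); (y, z); (x, z)]]].

(* support of a root alpha: negative roots (elements of T) crossing alpha *)
Definition Supp (T : {set seg}) (alpha : seg) : {set seg} :=
  [set s in T | cross s alpha].

(* S is connected in the underlying graph of Q_T (the empty set counts as connected) *)
Definition connected_in_quiver (T : {set seg}) (S : {set seg}) : Prop :=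
  forall u v, u \in S -> v \in S ->
    exists p : seq seg, [/\ path (quiver_adj T) u p, last u p = v & all (fun w => w \in S) p].
End Polygon.

From mathcomp Require Import all_boot zify.
Set Implicit Arguments. Unset Strict Implicit. Unset Printing Implicit Defensive.

(* Every diagonal (x, z) of T is the longest side of a triangle (x, y, z) of T
   lying below it.  A diagonal u of T nested in (x, z) cannot cross the two
   short sides, so (unless u = (x, z)) it is nested in one of them, and that
   side crosses every root crossing both u and (x, z).  Descending through
   such triangles connects each w in Supp a :&: Supp a' to every element of
   the intersection nested in w.  Two disjoint elements u, v of the
   intersection lie below the smallest edge of T enclosing both; the apex of
   the triangle under that edge separates them, and the two short sides of
   that triangle are adjacent in Q_T, cross a and a', and enclose u and v
   respectively. *)

Section Segments.
Variable N : nat.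
Implicit Types (s t u v w a : seg N) (x y z : 'I_N).

Definition nested s t := (t.1 <= s.1) && (s.2 <= t.2).

Definition width s := s.2 - s.1.

Lemma side_noncross s t : is_side s -> ~~ cross s t.
Proof.
case: s t => [p q] [c d]; rewrite /is_side /cross /=.
have := ltn_ord q; have := ltn_ord c; have := ltn_ord d; lia.
Qed.

Lemma diag_ltS s : is_diag s -> s.1.+1 < s.2.
Proof. case: s => p q; rewrite /is_diag /is_side /=; lia. Qed.

Lemma cross_nested_between u v w a :
  u.1 < u.2 -> nested u v -> nested v w -> cross u a -> cross w a -> cross v a.
Proof. rewrite /nested /cross; lia. Qed.

Lemma cross_both_sides u v x y z a :
  u.1 < u.2 -> v.1 < v.2 -> nested u (x, y) -> nested v (y, z) ->
  cross u a -> cross v a -> cross (x, y) a && cross (y, z) a.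
Proof. rewrite /nested /cross /=; lia. Qed.

Lemma noncross_nested_or_disjoint s t :
  s.1 < s.2 -> t.1 < t.2 -> ~~ cross s t ->
  [|| nested s t, nested t s, s.2 <= t.1 | t.2 <= s.1].
Proof. rewrite /nested /cross; lia. Qed.

Lemma nested_triangle_side s x y z :
  x < y < z -> s.1 < s.2 -> nested s (x, z) -> s != (x, z) ->
  ~~ cross (x, y) s -> ~~ cross (y, z) s -> nested s (x, y) || nested s (y, z).
Proof. case: s => c d; rewrite xpair_eqE -!val_eqE /nested /cross /=; lia. Qed.

Lemma triangle_sides_narrow x y z : x < y < z ->
  [/\ nested (x, y) (x, z), nested (y, z) (x, z),
      width (x, y) < width (x, z) & width (y, z) < width (x, z)].
Proof. by move=> xyz; rewrite /nested /width /=; split; lia. Qed.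

End Segments.

Definition quiver_adj_in N (T S : {set seg N}) : rel (seg N) :=
  fun u v => [&& u \in S, v \in S & quiver_adj T u v].

Lemma connected_in_quiver_connect N (T S : {set seg N}) :
  {in S &, forall u v, connect (quiver_adj_in T S) u v} -> connected_in_quiver T S.
Proof.
move=> conn u v Su Sv; have /connectP[p + ->] := conn u v Su Sv.
elim: p u Su => [|w p IH] u Su /=; first by exists [::].
case/andP=> /and3P[_ Sw uw] /(IH w Sw)[q [pq qp Sq]].
by exists (w :: q); rewrite /= uw pq qp Sw Sq.
Qed.

Section Quiver.
Variables (N : nat) (T : {set seg N}).
Implicit Types (s t u v w : seg N) (x y z : 'I_N).

Lemma quiver_adj_sym : symmetric (quiver_adj T).
Proof.
move=> s t; rewrite /quiver_adj eq_sym; congr (_ && _).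
by do 3 apply: eq_existsb => ?; rewrite !andbA andbAC.
Qed.

Lemma quiver_adj_in_sym (S : {set seg N}) : symmetric (quiver_adj_in T S).
Proof. by move=> u v; rewrite /quiver_adj_in quiver_adj_sym andbCA. Qed.

Lemma quiver_adj_triangle x y z s t :
  x < y < z -> T_edge T (x, y) -> T_edge T (y, z) -> T_edge T (x, z) ->
  s \in [:: (x, y); (y, z); (x, z)] -> t \in [:: (x, y); (y, z); (x, z)] ->
  s != t -> quiver_adj T s t.
Proof.
move=> /andP[xy yz] Exy Eyz Exz s_in t_in st; rewrite /quiver_adj st.
apply/existsP; exists x; apply/existsP; exists y; apply/existsP; exists z.
by rewrite xy yz Exy Eyz Exz s_in t_in.
Qed.

Lemma triangle_quiver_adj x y z :
  x < y < z -> T_edge T (x, y) -> T_edge T (y, z) -> T_edge T (x, z) ->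
  [/\ quiver_adj T (x, y) (y, z), quiver_adj T (x, z) (x, y)
    & quiver_adj T (x, z) (y, z)].
Proof.
move=> xyz Exy Eyz Exz.
by split; apply: (quiver_adj_triangle xyz) => //; rewrite ?inE ?eqxx ?orbT //
  xpair_eqE -!val_eqE /=; lia.
Qed.

Lemma T_edge_cross_mem s t : T_edge T s -> cross s t -> s \in T.
Proof. by case/orP=> // /side_noncross/negbTE->. Qed.

Lemma exists_min_enclosing_edge u v : u.1 < u.2 ->
  exists2 w, [&& T_edge T w, nested u w & nested v w] &
    forall w', [&& T_edge T w', nested u w' & nested v w'] -> width w <= width w'.
Proof.
move=> uu; have N0 : 0 < N by have := ltn_ord u.1; lia.
have N1 : N.-1 < N by lia.
pose P w := [&& T_edge T w, nested u w & nested v w].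
have P0 : P (Ordinal N0, Ordinal N1).
  apply/and3P; split; first (apply/orP; left; rewrite /is_side /=);
  rewrite /nested /=; have := ltn_ord u.2; have := ltn_ord v.1; have := ltn_ord v.2; lia.
by have [w Pw wmin] := arg_minnP (@width N) P0; exists w.
Qed.

Hypothesis HT : triangulation T.

Lemma mem_triangulation_diag s : s \in T -> is_diag s.
Proof. by case: HT => diag _ _; apply: diag. Qed.

Lemma mem_triangulation_lt s : s \in T -> s.1 < s.2.
Proof. by case/mem_triangulation_diag/andP. Qed.

Lemma T_edge_noncross s t : T_edge T s -> t \in T -> ~~ cross s t.
Proof. by case: HT => _ nc _; case/orP=> [/side_noncross//|]; apply: nc. Qed.

(* The apex is the farthest y with (x, y) an edge of T; if (y, z) were not an
   edge, a diagonal of T crossing it would have to start at x and end beyond y. *)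
Lemma T_edge_apex x z : T_edge T (x, z) -> x.+1 < z ->
  exists y, [/\ x < y < z, T_edge T (x, y) & T_edge T (y, z)].
Proof.
move=> Exz xz; have x1N : x.+1 < N by have := ltn_ord z; lia.
pose P y := (x < y < z) && T_edge T (x, y).
have P0 : P (Ordinal x1N).
  by apply/andP; split; [|apply/orP; left; rewrite /is_side]; rewrite /=; lia.
have [y /andP[xyz Exy] ymax] := arg_maxnP val P0.
exists y; split=> //; apply/negPn/negP; rewrite negb_or => /andP[side_yz yzT].
have diag_yz : is_diag (y, z) by rewrite /is_diag side_yz andbT /=; lia.
have [_ _ maxT] := HT; have [[p q] tT cross_t] := maxT _ diag_yz yzT.
move: cross_t (mem_triangulation_lt tT).
move: (T_edge_noncross Exz tT) (T_edge_noncross Exy tT).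
rewrite /cross /= => nc_xz nc_xy cross_t pq.
suff: q <= y by lia.
apply: ymax; rewrite /P /T_edge (_ : x = p) ?tT ?orbT ?andbT /=; first by lia.
by apply: val_inj => /=; lia.
Qed.

Lemma triangle_below x z u :
  (x, z) \in T -> u \in T -> nested u (x, z) -> u != (x, z) ->
  exists w, [/\ T_edge T w, quiver_adj T (x, z) w, nested w (x, z),
                width w < width (x, z) & nested u w].
Proof.
move=> xzT uT uxz uNxz; have Exz : T_edge T (x, z) by rewrite /T_edge xzT orbT.
have [y [xyz Exy Eyz]] := T_edge_apex Exz (diag_ltS (mem_triangulation_diag xzT)).
have [_ adj_xy adj_yz] := triangle_quiver_adj xyz Exy Eyz Exz.
have := nested_triangle_side xyz (mem_triangulation_lt uT) uxz uNxz
  (T_edge_noncross Exy uT) (T_edge_noncross Eyz uT).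
have [xy_xz yz_xz narrow_xy narrow_yz] := triangle_sides_narrow xyz.
by case/orP=> [u_xy|u_yz]; [exists (x, y)|exists (y, z)].
Qed.

End Quiver.

Section Support.
Variables (N : nat) (T : {set seg N}) (a a' : seg N).
Hypothesis HT : triangulation T.
Implicit Types (s u v w : seg N).
Local Notation S := (Supp T a :&: Supp T a').
Local Notation adj := (quiver_adj_in T S).

Lemma mem_supp2 s : (s \in S) = [&& s \in T, cross s a & cross s a'].
Proof. by rewrite !inE; case: (s \in T). Qed.

Lemma T_edge_supp w : T_edge T w -> cross w a -> cross w a' -> w \in S.
Proof. by move=> Ew wa wa'; rewrite mem_supp2 wa wa' (T_edge_cross_mem Ew wa). Qed.

Lemma connect_supp_sym : connect_sym adj.
Proof. exact/sym_connect_sym/quiver_adj_in_sym. Qed.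

Lemma connect_nested w u : w \in S -> u \in S -> nested u w -> connect adj w u.
Proof.
have [k] := ubnP (width w); elim: k w => // k IH [x z] wk Sw Su uw.
have [->|uNw] := eqVneq u (x, z); first exact: connect0.
move: (Sw) (Su); rewrite !mem_supp2 => /and3P[wT wa wa'] /and3P[uT ua ua'].
have [w' [Ew' adj_ww' w'w narrow u_w']] := triangle_below HT wT uT uw uNw.
have uu := mem_triangulation_lt HT uT.
have Sw' : w' \in S.
  by apply: T_edge_supp Ew' (cross_nested_between uu u_w' w'w ua wa)
    (cross_nested_between uu u_w' w'w ua' wa').
have w'k : width w' < k by move: wk narrow; clear; lia.
apply: connect_trans (connect1 _) (IH _ w'k Sw' Su u_w').
by rewrite /quiver_adj_in Sw Sw' adj_ww'.
Qed.

Lemma connect_disjoint u v : u \in S -> v \in S -> u.2 <= v.1 -> connect adj u v.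
Proof.
move=> Su Sv uv; move: (Su) (Sv); rewrite !mem_supp2 => /and3P[uT _ _] /and3P[vT _ _].
have uu := mem_triangulation_lt HT uT; have vv := mem_triangulation_lt HT vT.
have [[x z] /and3P[Exz u_xz v_xz] zmin] := exists_min_enclosing_edge T v uu.
have xz : x.+1 < z by move: u_xz v_xz uu vv uv; rewrite /nested /=; clear; lia.
have [y [xyz Exy Eyz]] := T_edge_apex HT Exz xz.
have side_of (s : seg N) : s \in T -> nested s (x, z) -> s != (x, z) ->
    nested s (x, y) || nested s (y, z).
  move=> sT sxz sNxz; have ss := mem_triangulation_lt HT sT.
  exact: nested_triangle_side xyz ss sxz sNxz
    (T_edge_noncross HT Exy sT) (T_edge_noncross HT Eyz sT).
have [uNxz vNxz] : u != (x, z) /\ v != (x, z).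
  by split; apply: contraTneq uv => ->; move: u_xz v_xz uu vv;
    rewrite /nested /=; clear; lia.
have [_ _ narrow_xy narrow_yz] := triangle_sides_narrow xyz.
have u_xy : nested u (x, y).
  have /orP[//|u_yz] := side_of u uT u_xz uNxz.
  have v_yz : nested v (y, z) by move: u_yz v_xz uv uu; rewrite /nested /=; clear; lia.
  by have := zmin (y, z); rewrite Eyz u_yz v_yz leqNgt narrow_yz => /(_ isT).
have v_yz : nested v (y, z).
  have /orP[v_xy|//] := side_of v vT v_xz vNxz.
  by have := zmin (x, y); rewrite Exy u_xy v_xy leqNgt narrow_xy => /(_ isT).
move: (Su) (Sv); rewrite !mem_supp2 => /and3P[_ ua ua'] /and3P[_ va va'].
have /andP[xya yza] := cross_both_sides uu vv u_xy v_yz ua va.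
have /andP[xya' yza'] := cross_both_sides uu vv u_xy v_yz ua' va'.
have Sxy := T_edge_supp Exy xya xya'; have Syz := T_edge_supp Eyz yza yza'.
have [adj_xy_yz _ _] := triangle_quiver_adj xyz Exy Eyz Exz.
have u_to_xy : connect adj u (x, y).
  by rewrite connect_supp_sym; apply: connect_nested.
have xy_to_yz : connect adj (x, y) (y, z).
  by apply: connect1; rewrite /quiver_adj_in Sxy Syz adj_xy_yz.
exact: connect_trans u_to_xy (connect_trans xy_to_yz (connect_nested Syz Sv v_yz)).
Qed.

Lemma connect_supp u v : u \in S -> v \in S -> connect adj u v.
Proof.
move=> Su Sv; move: (Su) (Sv); rewrite !mem_supp2 => /and3P[uT _ _] /and3P[vT _ _].
have [_ noncross _] := HT.
have := noncross_nested_or_disjoint (mem_triangulation_lt HT uT)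
  (mem_triangulation_lt HT vT) (noncross _ _ uT vT).
case/or4P=> [uv|vu|uv|vu].
- by rewrite connect_supp_sym; apply: connect_nested.
- exact: connect_nested.
- exact: connect_disjoint.
- by rewrite connect_supp_sym; apply: connect_disjoint.
Qed.

End Support.

Theorem mainTheorem11 (n : nat) (T : {set seg n.+3}) (alpha alpha' : seg n.+3) :
  triangulation T ->
  is_diag alpha -> alpha \notin T ->
  is_diag alpha' -> alpha' \notin T ->
  connected_in_quiver T (Supp T alpha :&: Supp T alpha').
Proof.
move=> HT _ _ _ _; apply: connected_in_quiver_connect => u v; exact: connect_supp.
Qed.
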